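(* Consider the algorithm ECCom described in the context, and fix an epoch $i$. If $f_N^{i'}+f_L^{i'}\ge 1/4$, then with high probability $f_N^{i}+f_L^{i}\ge 1/6$.
   Context: Setting. A dynamic system of IDs with at least $n_0$ good IDs at all times; ''with high probability'' means with probability at least $1-n_0^{-c'}$ for a desired constant $c'$ (relative to a lifetime of $O(n_0^{\gamma})$ events, $\gamma\ge1$ a constant). A committee runs algorithm ECCom: it maintains $\mathcal S_{\mathrm{old}}$, the set of IDs present after the most recent purge (start of the epoch), and $\mathcal S$, the current set of IDs. It uses a hash function $h'$, unknown to the IDs and behaving as a uniformly random function to $[0,1)$, and places an ID $v$ in the sample when $h'(v)\le c\log n_0/|\mathcal S_{\mathrm{old}}|$, where $c>0$ is a sufficiently large constant depending on $\gamma$. The sample set $\mathcal S'_{\mathrm{old}}$ consists of the sampled IDs of $\mathcal S_{\mathrm{old}}$ at the start of the epoch; the current sample set $\mathcal S'$ consists of the sampled IDs currently present. A purge is triggered when $|(\mathcal S'\cup\mathcal S'_{\mathrm{old}})\setminus(\mathcal S'\cap\mathcal S'_{\mathrm{old}})|\ge|\mathcal S'_{\mathrm{old}}|/4$. Notation. For epoch $i$: $f_N^i$ is the fraction (relative to $|\mathcal S_{\mathrm{old}}|$) of IDs that joined during the epoch and remain active, and $f_L^i$ is the fraction of IDs of $\mathcal S_{\mathrm{old}}$ that have left; $f_N^{i'}$ and $f_L^{i'}$ are the corresponding fractions for the sample sets (relative to $|\mathcal S'_{\mathrm{old}}|$). *)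

From HB Require Import structures.
From mathcomp Require Import all_boot all_order all_algebra.
From mathcomp Require Import reals exp.
Set Implicit Arguments. Unset Strict Implicit. Unset Printing Implicit Defensive.
Import Order.TTheory GRing.Theory Num.Theory.
Local Open Scope ring_scope.

Section ECCom.
Variable R : realType.
Variable T : finType. (* all IDs that occur during the epoch *)

Definition fN (Sold S : {set T}) : R := #|S :\: Sold|%:R / #|Sold|%:R.
Definition fL (Sold S : {set T}) : R := #|Sold :\: S|%:R / #|Sold|%:R.

Definition sample_threshold (c : R) (n0 : nat) (Sold : {set T}) : R :=
  c * ln (n0%:R) / #|Sold|%:R.

(* Probability that a given ID v satisfies h'(v) <= q, for h'(v) uniform on [0,1) *)
Definition hit_prob (q : R) : R := Num.min (Num.max q 0) 1.

(* Law of the random set A = {v | h'(v) <= q} when the values h'(v) are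
   independent and uniform on [0,1): each ID is in A independently with
   probability hit_prob q. *)
Definition sample_weight (q : R) (A : {set T}) : R :=
  \prod_(v in A) hit_prob q * \prod_(v in ~: A) (1 - hit_prob q).

Definition sample_prob (q : R) (E : pred {set T}) : R :=
  \sum_(A : {set T} | E A) sample_weight q A.

(* Bad event at a state with current ID set S, for sampled set A:
   S'_old = Sold :&: A, S' = S :&: A,
   f_N^{i'} + f_L^{i'} >= 1/4 but f_N^i + f_L^i < 1/6. *)
Definition bad_state (Sold S A : {set T}) : bool :=
  (4^-1 <= fN (Sold :&: A) (S :&: A) + fL (Sold :&: A) (S :&: A))
  && (fN Sold S + fL Sold S < 6^-1).

End ECCom.

From HB Require Import structures.
From mathcomp Require Import all_boot all_order all_algebra.
From mathcomp Require Import reals exp sequences.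
From mathcomp Require Import ring lra.
Set Implicit Arguments.
Unset Strict Implicit.
Unset Printing Implicit Defensive.

Import Order.TTheory GRing.Theory Num.Theory.
Local Open Scope ring_scope.

(* If the true churn f_N + f_L is below 1/6 while the sampled churn reaches
   1/4, then 4 (sampled churned IDs) >= (sampled IDs of S_old), although in
   expectation the left side is at most 2/3 of the right.  An exponential
   moment bound with base 11/10 shows that this happens with probability at
   most exp(-p |S_old| / 100) = n0^(-c/100), where p = c log n0 / |S_old| is
   the sampling probability; a union bound over the polynomially many states
   of the epoch concludes.  When p >= 1 every ID is sampled and the bad event
   is impossible. *)

Section SampleProb.
Variables (R : realType) (T : finType).
Implicit Types (q : R) (A B : {set T}) (E : pred {set T}).

Lemma hit_prob_ge0 q : 0 <= hit_prob q.
Proof. by rewrite /hit_prob le_min ler01 le_max lexx orbT. Qed.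

Lemma hit_prob_le1 q : hit_prob q <= 1.
Proof. by rewrite /hit_prob ge_min lexx orbT. Qed.

Lemma sample_weightE q A :
  sample_weight q A =
    \prod_(v : T) (if v \in A then hit_prob q else 1 - hit_prob q).
Proof.
rewrite /sample_weight [X in X * _]big_mkcond [X in _ * X]big_mkcond.
rewrite -big_split; apply: eq_bigr => v _ /=.
by rewrite inE; case: (v \in A); rewrite ?mulr1 ?mul1r.
Qed.

Lemma sample_weight_ge0 q A : 0 <= sample_weight q A.
Proof.
rewrite sample_weightE; apply: prodr_ge0 => v _.
by case: (v \in A); rewrite ?hit_prob_ge0 ?subr_ge0 ?hit_prob_le1.
Qed.

Lemma sample_prob_eq0 q E : (forall A, ~~ E A) -> sample_prob q E = 0.
Proof.
by move=> notE; rewrite /sample_prob big_pred0 // => A; apply/negbTE.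
Qed.

Lemma sample_prob_predU q E1 E2 :
  sample_prob q [pred A | E1 A || E2 A] <= sample_prob q E1 + sample_prob q E2.
Proof.
rewrite /sample_prob big_mkcond [X in _ <= X + _]big_mkcond.
rewrite [X in _ <= _ + X]big_mkcond -big_split /=.
apply: ler_sum => A _; have := sample_weight_ge0 q A.
by case: (E1 A); case: (E2 A) => /= w_ge0; rewrite ?addr0 ?add0r ?lerDl.
Qed.

Lemma sample_prob_has_le q (X : Type) (E : X -> {set T} -> bool) (s : seq X)
    (b : R) :
  (forall x, sample_prob q (E x) <= b) ->
  sample_prob q [pred A | has (fun x => E x A) s] <= (size s)%:R * b.
Proof.
move=> Eb; elim: s => [|x s IHs]; first by rewrite mul0r sample_prob_eq0.
apply: le_trans (sample_prob_predU q (E x) _) _.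
by rewrite /= -add1n natrD mulrDl mul1r lerD.
Qed.

Lemma sample_prob_full q E :
  hit_prob q = 1 -> ~~ E setT -> sample_prob q E = 0.
Proof.
move=> p1 notET; rewrite /sample_prob big1 // => A EA.
have [v vA|allA] := pickP (fun v => v \notin A).
  by rewrite sample_weightE (bigD1 v) //= (negbTE vA) p1 subrr mul0r.
have AT : A = setT by apply/setP => v; have := allA v; rewrite inE => /negbFE.
by move: EA; rewrite AT (negbTE notET).
Qed.

Lemma sum_subsets_prod (h : T -> bool -> R) :
  \sum_(A : {set T}) \prod_(v : T) h v (v \in A) =
    \prod_(v : T) (h v true + h v false).
Proof.
under [RHS]eq_bigr do rewrite -big_bool.
rewrite bigA_distr_bigA /=.
rewrite (reindex (fun f : {ffun T -> bool} => [set v | f v])) /=.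
  by apply: eq_bigr => f _; apply: eq_bigr => v _; rewrite inE.
exists (fun A : {set T} => [ffun v => v \in A]) => [f _ | A _].
  by apply/ffunP => v; rewrite ffunE inE.
by apply/setP => v; rewrite inE ffunE.
Qed.

Lemma sum_sample_weight_prod q (g : T -> R) :
  \sum_(A : {set T}) sample_weight q A * \prod_(v in A) g v =
    \prod_(v : T) (hit_prob q * g v + (1 - hit_prob q)).
Proof.
pose h v (b : bool) := if b then hit_prob q * g v else 1 - hit_prob q.
rewrite -(sum_subsets_prod h).
apply: eq_bigr => A _; rewrite sample_weightE [X in _ * X]big_mkcond -big_split.
by apply: eq_bigr => v _ /=; case: (v \in A); rewrite ?mulr1.
Qed.

(* Markov's inequality for the nonnegative variable A |-> prod_(v in A) g v,
   whose mean factorizes over the independent IDs; then 1 + x <= e^x. *)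
Lemma sample_prob_le_expR q E (g : T -> R) :
  (forall v, 0 <= g v) -> (forall A, E A -> 1 <= \prod_(v in A) g v) ->
  sample_prob q E <= expR (hit_prob q * \sum_(v : T) (g v - 1)).
Proof.
move=> g_ge0 E_ge1; set p := hit_prob q.
have p_ge0 : 0 <= p := hit_prob_ge0 q.
have p_le1 : p <= 1 := hit_prob_le1 q.
apply: (@le_trans _ _
  (\sum_(A : {set T}) sample_weight q A * \prod_(v in A) g v)).
  rewrite /sample_prob big_mkcond /=; apply: ler_sum => A _.
  have w_ge0 := sample_weight_ge0 q A.
  case: ifP => [/E_ge1 ge1|_]; first by rewrite ler_peMr.
  by rewrite mulr_ge0 // prodr_ge0.
rewrite sum_sample_weight_prod mulr_sumr expR_sum.
apply: ler_prod => v _; apply/andP; split.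
  by rewrite addr_ge0 ?mulr_ge0 ?subr_ge0.
have -> : p * g v + (1 - p) = 1 + p * (g v - 1) by ring.
exact: expR_ge1Dx.
Qed.

Lemma sum_mem_card A B : (\sum_(v in A) (v \in B) = #|A :&: B|)%N.
Proof.
rewrite -sum1_card big_mkcond [RHS]big_mkcond; apply: eq_bigr => v _ /=.
by rewrite inE; case: (v \in A); case: (v \in B).
Qed.

Lemma sumr_mem_card B : \sum_(v : T) ((v \in B)%:R : R) = #|B|%:R.
Proof. by under eq_bigr do rewrite mulrb; rewrite -big_mkcond sumr_const. Qed.

End SampleProb.

Section BadState.
Variables (R : realType) (T : finType) (Sold S : {set T}).

Lemma bad_state_card A : bad_state R Sold S A ->
  (#|Sold :&: A| <= 4 * #|(S :\: Sold) :&: A| + 4 * #|(Sold :\: S) :&: A|)%N.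
Proof.
have sampled_diff (X Y : {set T}) : (X :&: A) :\: (Y :&: A) = (X :\: Y) :&: A.
  by apply/setP => v; rewrite !inE; case: (v \in A); rewrite ?andbT ?andbF.
case/andP; rewrite /fN /fL !sampled_diff -mulrDl => churn_ge _.
have [->|/negbTE nz] := eqVneq #|Sold :&: A| 0%N; first by [].
rewrite -(ler_nat R) natrD !natrM; move: churn_ge.
by rewrite ler_pdivlMr ?ltr0n ?lt0n ?nz //; lra.
Qed.

(* The tilt e^(t X_v) of a Chernoff bound for X = 4 (sampled churned IDs)
   - (sampled IDs of S_old), with e^t = 11/10. *)
Definition chernoff_tilt (v : T) : R :=
  (11 / 10) ^+ (4 * (v \in S :\: Sold) + 4 * (v \in Sold :\: S))
  / (11 / 10) ^+ (v \in Sold).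

Lemma chernoff_tilt_ge0 v : 0 <= chernoff_tilt v.
Proof. by rewrite /chernoff_tilt divr_ge0 // exprn_ge0 // divr_ge0. Qed.

Lemma bad_state_tilt A :
  bad_state R Sold S A -> 1 <= \prod_(v in A) chernoff_tilt v.
Proof.
move=> /bad_state_card; rewrite !(setIC _ A) => card_le.
have s_gt1 : (1 : R) <= 11 / 10 by lra.
rewrite /chernoff_tilt prodf_div !prodrXr big_split /= -!big_distrr /=.
rewrite !sum_mem_card ler_pdivlMr ?exprn_gt0 ?(lt_le_trans ltr01) // mul1r.
exact: ler_weXn2l.
Qed.

Lemma sum_chernoff_tilt_le : (0 < #|Sold|)%N ->
  fN R Sold S + fL R Sold S < 6^-1 ->
  \sum_(v : T) (chernoff_tilt v - 1) <= - (#|Sold|%:R / 100).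
Proof.
move=> Sold_gt0 churn_lt.
pose a : R := (11 / 10) ^+ 4 - 1; pose b : R := (11 / 10)^-1 - 1.
have tilt_le v : chernoff_tilt v - 1 <=
    a * (v \in S :\: Sold)%:R + a * (v \in Sold :\: S)%:R + b * (v \in Sold)%:R.
  rewrite /chernoff_tilt /a /b !inE.
  by case: (v \in S); case: (v \in Sold); rewrite /= ?expr0 ?exprS ?expr0; lra.
have churn_le : #|S :\: Sold|%:R + #|Sold :\: S|%:R <= #|Sold|%:R / 6 :> R.
  move: churn_lt; rewrite /fN /fL -mulrDl ltr_pdivrMr ?ltr0n // => churn_lt.
  lra.
apply: le_trans (ler_sum _ (fun v _ => tilt_le v)) _.
have Sold_ge0 : (0 : R) <= #|Sold|%:R := ler0n R _.
rewrite !big_split /= -!mulr_sumr !sumr_mem_card /a /b !exprS expr0.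
lra.
Qed.

Lemma sample_prob_bad_state (q : R) : (0 < #|Sold|)%N ->
  sample_prob q (bad_state R Sold S)
    <= expR (- (hit_prob q * #|Sold|%:R) / 100).
Proof.
move=> Sold_gt0.
have [churn_lt|churn_ge] := ltP (fN R Sold S + fL R Sold S) 6^-1.
  apply: le_trans (sample_prob_le_expR q chernoff_tilt_ge0 bad_state_tilt) _.
  rewrite ler_expR mulNr -mulrA -mulrN.
  apply: ler_wpM2l (hit_prob_ge0 q) _ _ _.
  exact: sum_chernoff_tilt_le.
rewrite sample_prob_eq0 ?expR_ge0 // => A.
by rewrite /bad_state ltNge churn_ge andbF.
Qed.

Lemma bad_stateT : ~~ bad_state R Sold S setT.
Proof. by rewrite /bad_state !setIT; apply/negP => /andP[]; lra. Qed.

End BadState.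

Lemma mulr_powR_expR_le (R : realType) (n K gamma c' c : R) :
  1 <= n -> 0 <= K -> K <= n -> 100 * (gamma + c' + 1) <= c ->
  K * n `^ gamma * expR (- (c * ln n) / 100) <= n `^ (- c').
Proof.
move=> n_ge1 K_ge0 K_le_n c_ge.
have n_neq0 : n != 0 by rewrite gt_eqF // (lt_le_trans ltr01).
have -> : expR (- (c * ln n) / 100) = n `^ (- (c / 100)).
  by rewrite /powR (negbTE n_neq0); congr expR; ring.
apply: (@le_trans _ _ (n `^ 1 * n `^ gamma * n `^ (- (c / 100)))).
  rewrite powRr1 ?(le_trans ler01) //.
  by apply: ler_wpM2r; [exact: powR_ge0 | apply: ler_wpM2r; [exact: powR_ge0|]].
by rewrite -!powRD ?n_neq0 ?implybT //; apply: ler_powR => //; lra.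
Qed.

Theorem lemma6 (R : realType) (gamma c' : R) :
  1 <= gamma -> 0 < c' ->
  exists c0 : R, forall c : R, c0 <= c ->
  forall K : R, 0 < K ->
  exists N0 : nat, forall n0 : nat, (N0 <= n0)%N ->
  forall (T : finType) (Sold : {set T}) (Ss : seq {set T}),
    (n0 <= #|Sold|)%N ->
    (forall S, S \in Ss -> (n0 <= #|S|)%N) ->
    (size Ss)%:R <= K * (n0%:R `^ gamma) ->
    sample_prob (sample_threshold c n0 Sold)
      [pred A : {set T} | has (fun S => bad_state R Sold S A) Ss]
    <= n0%:R `^ (- c').
Proof.
move=> gamma_ge1 c'_gt0; exists (100 * (gamma + c' + 1)) => c c_ge K K_gt0.
exists (Num.truncn K).+1 => n0 n0_ge T Sold Ss Sold_ge _ size_le.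
set n : R := n0%:R.
have K_lt_n : K < n by apply: lt_le_trans (truncnS_gt K) _; rewrite ler_nat.
have n_ge1 : 1 <= n by rewrite (ler_nat R 1) (leq_trans _ n0_ge).
have Sold_gt0 : (0 < #|Sold|)%N.
  by rewrite (leq_trans _ Sold_ge) // (leq_trans _ n0_ge).
set q := sample_threshold c n0 Sold.
have q_ge0 : 0 <= q by rewrite divr_ge0 // mulr_ge0 ?ln_ge0 //; lra.
have [q_ge1|q_lt1] := leP 1 q.
  rewrite sample_prob_full ?powR_ge0 //.
    by rewrite /hit_prob max_l // min_r.
  by apply/hasPn => S _; exact: bad_stateT.
have sampled : hit_prob q * #|Sold|%:R = c * ln n.
  by rewrite /hit_prob max_l // min_l ?ltW // divfK // pnatr_eq0 -lt0n.
apply: le_trans (sample_prob_has_le (b := expR (- (c * ln n) / 100)) Ss _) _.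
  by move=> S; rewrite -sampled; exact: sample_prob_bad_state.
apply: (@le_trans _ _ (K * n `^ gamma * expR (- (c * ln n) / 100))).
  by rewrite ler_pM2r ?expR_gt0.
by apply: mulr_powR_expR_le => //; apply: ltW.
Qed.
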